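(* Let $k\ge 1$ be an integer and for $x_1,\dots,x_k\ge 1$ define $$F(x_1,\dots,x_k)=\frac{\sum_{i=1}^k i\left(1-\frac{1}{x_i}\right)}{\sum_{i=1}^k i\prod_{j=i+1}^k x_j}.$$ Then $\sup_{x_1,\dots,x_k\ge 1}F(x_1,\dots,x_k)=\frac{1}{k}$.
   Context: The empty product (for $i=k$) equals $1$. *)

From Stdlib Require Import Reals.
Open Scope R_scope.

Fixpoint sumR (f : nat -> R) (m len : nat) : R :=
  match len with
  | O => 0
  | S l => f m + sumR f (S m) l
  end.

(* prod_{i=m}^{m+len-1} f i *)
Fixpoint prodR (f : nat -> R) (m len : nat) : R :=
  match len with
  | O => 1
  | S l => f m * prodR f (S m) l
  end.

Definition numF (k : nat) (x : nat -> R) : R :=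
  sumR (fun i => INR i * (1 - / x i)) 1 k.

(* Denominator: sum_{i=1}^k i * prod_{j=i+1}^k x_j (empty product = 1) *)
Definition denF (k : nat) (x : nat -> R) : R :=
  sumR (fun i => INR i * prodR x (S i) (k - i)) 1 k.

Definition F (k : nat) (x : nat -> R) : R := numF k x / denF k x.

(* The set of values F(x_1,...,x_k) with all x_i >= 1 (only x_1..x_k matter). *)
Definition Fvalues (k : nat) (v : R) : Prop :=
  exists x : nat -> R, (forall i, (1 <= i <= k)%nat -> 1 <= x i) /\ v = F k x.

From Stdlib Require Import Reals Lra Lia.
Open Scope R_scope.

(* Write P_i = prod_{j=i+1}^k x_j, so that F = N / D with
   N = sum_i i (1 - 1/x_i) and D = sum_i i P_i.

   Upper bound (k N <= D).  The elementary inequality b (ln a - ln b) <= a - b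
   (from ln t <= t - 1), applied once with (a, b) = (i P_i, k) and once with
   (a, b) = (i / x_i, i - 1), bounds each summand i P_i - k i (1 - 1/x_i) of
   D - k N from below by k times a logarithmic expression.  Summed over i these
   logarithmic expressions cancel exactly: sum_i ln P_i = sum_j (j-1) ln x_j
   (an exchange of summation) and sum_i (ln i + (i-1)(ln i - ln (i-1))) = k ln k
   (a telescoping sum).  Hence D - k N >= 0, and D >= 1 > 0 gives F <= 1/k.

   Sharpness.  At x_1 = M, x_i = i/(i-1) (i >= 2) the products telescope to
   P_i = k/i, so D = k^2 and N = k - 1/M; thus F = (k - 1/M)/k^2, which exceeds
   any b < 1/k once M is large. *)

Lemma sumR_ext (f g : nat -> R) (m l : nat) :
  (forall i, (m <= i < m + l)%nat -> f i = g i) -> sumR f m l = sumR g m l.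
Proof.
  revert m; induction l as [|l IH]; intros m Hfg; simpl; [reflexivity|].
  rewrite (Hfg m) by lia. rewrite (IH (S m)); [reflexivity|].
  intros i Hi; apply Hfg; lia.
Qed.

Lemma sumR_le (f g : nat -> R) (m l : nat) :
  (forall i, (m <= i < m + l)%nat -> f i <= g i) -> sumR f m l <= sumR g m l.
Proof.
  revert m; induction l as [|l IH]; intros m Hfg; simpl; [lra|].
  assert (Hm : f m <= g m) by (apply Hfg; lia).
  assert (Hrest : sumR f (S m) l <= sumR g (S m) l) by (apply IH; intros; apply Hfg; lia).
  lra.
Qed.

Lemma sumR_add (f g : nat -> R) (m l : nat) :
  sumR (fun i => f i + g i) m l = sumR f m l + sumR g m l.
Proof. revert m; induction l as [|l IH]; intros m; simpl; [lra|rewrite IH; lra]. Qed.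

Lemma sumR_sub (f g : nat -> R) (m l : nat) :
  sumR (fun i => f i - g i) m l = sumR f m l - sumR g m l.
Proof. revert m; induction l as [|l IH]; intros m; simpl; [lra|rewrite IH; lra]. Qed.

Lemma sumR_scal (a : R) (f : nat -> R) (m l : nat) :
  sumR (fun i => a * f i) m l = a * sumR f m l.
Proof. revert m; induction l as [|l IH]; intros m; simpl; [lra|rewrite IH; lra]. Qed.

Lemma sumR_const (c : R) (m l : nat) : sumR (fun _ => c) m l = INR l * c.
Proof.
  revert m; induction l as [|l IH]; intros m; cbn [sumR]; [simpl; lra|].
  rewrite IH, S_INR; lra.
Qed.

Lemma sumR_last (f : nat -> R) (m l : nat) :
  sumR f m (S l) = sumR f m l + f (m + l)%nat.
Proof.
  revert m; induction l as [|l IH]; intros m; simpl.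
  - rewrite Nat.add_0_r; lra.
  - simpl in IH; rewrite IH.
    replace (S m + l)%nat with (m + S l)%nat by lia. lra.
Qed.

Lemma sumR_telescope (g : nat -> R) (k : nat) :
  sumR (fun i => g i - g (pred i)) 1 k = g k - g 0%nat.
Proof.
  induction k as [|k IH]; [simpl; lra|].
  rewrite sumR_last, IH. replace (1 + k)%nat with (S k) by lia. simpl; lra.
Qed.

Lemma sumR_exchange (f : nat -> R) (k : nat) :
  sumR (fun i => sumR f (S i) (k - i)) 1 k = sumR (fun j => (INR j - 1) * f j) 1 k.
Proof.
  induction k as [|k IH]; [reflexivity|].
  rewrite !sumR_last. replace (1 + k)%nat with (S k) by lia.
  rewrite Nat.sub_diag; simpl (sumR f _ 0).
  rewrite (sumR_ext _ (fun i => sumR f (S i) (k - i) + f (S k))).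
  - rewrite sumR_add, sumR_const, IH, S_INR. ring.
  - intros i Hi. replace (S k - i)%nat with (S (k - i)) by lia.
    rewrite sumR_last. do 2 f_equal. lia.
Qed.

Lemma prodR_ge1 (x : nat -> R) (m l : nat) :
  (forall i, (m <= i < m + l)%nat -> 1 <= x i) -> 1 <= prodR x m l.
Proof.
  revert m; induction l as [|l IH]; intros m Hx; simpl; [lra|].
  assert (Hm : 1 <= x m) by (apply Hx; lia).
  assert (Hrest : 1 <= prodR x (S m) l) by (apply IH; intros; apply Hx; lia).
  nra.
Qed.

Lemma ln_prodR (x : nat -> R) (m l : nat) :
  (forall i, (m <= i < m + l)%nat -> 1 <= x i) ->
  ln (prodR x m l) = sumR (fun j => ln (x j)) m l.
Proof.
  revert m; induction l as [|l IH]; intros m Hx; simpl; [apply ln_1|].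
  assert (Hm : 1 <= x m) by (apply Hx; lia).
  assert (Hrest : 1 <= prodR x (S m) l) by (apply prodR_ge1; intros; apply Hx; lia).
  rewrite ln_mult, IH by (try lra; intros; apply Hx; lia). reflexivity.
Qed.

(* The key elementary inequality b ln (a/b) <= a - b (trivially true for b = 0),
   a rescaled form of ln t <= t - 1. *)
Lemma ln_weighted_le (a b : R) : 0 < a -> 0 <= b -> b * (ln a - ln b) <= a - b.
Proof.
  intros Ha Hb. destruct (Req_dec b 0) as [Hb0|Hb0]; [subst; lra|].
  assert (Hab : 0 < a / b) by (apply Rdiv_lt_0_compat; lra).
  assert (Hln : ln (a / b) <= a / b - 1).
  { pose proof (exp_ineq1_le (ln (a / b))) as He. rewrite exp_ln in He; lra. }
  assert (Hdiv : ln (a / b) = ln a - ln b).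
  { unfold Rdiv. rewrite ln_mult, ln_Rinv by (try apply Rinv_0_lt_compat; lra). ring. }
  rewrite <- Hdiv.
  replace (a - b) with (b * (a / b - 1)) by (field; lra).
  apply Rmult_le_compat_l; lra.
Qed.

(* Per-term inequality: for i >= 1, k, p, x > 0,
   k (ln i - ln k + ln p + (i-1)(ln i - ln (i-1) - ln x)) <= i p - k i (1 - 1/x).
   It combines [ln_weighted_le] at (i p, k) and at (i/x, i-1). *)
Lemma term_bound (k i p x : R) :
  0 < k -> 1 <= i -> 0 < p -> 0 < x ->
  k * (ln i - ln k + ln p + (i - 1) * (ln i - ln (i - 1) - ln x))
  <= i * p - k * (i * (1 - / x)).
Proof.
  intros Hk Hi Hp Hx.
  assert (Hpart1 : k * (ln (i * p) - ln k) <= i * p - k)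
    by (apply ln_weighted_le; nra).
  assert (Hpart2 : (i - 1) * (ln (i * / x) - ln (i - 1)) <= i * / x - (i - 1)).
  { apply ln_weighted_le; [|lra]. apply Rmult_lt_0_compat; [lra|].
    apply Rinv_0_lt_compat; lra. }
  rewrite ln_mult in Hpart1 by lra.
  rewrite ln_mult, ln_Rinv in Hpart2 by (try apply Rinv_0_lt_compat; lra).
  apply (Rmult_le_compat_l k) in Hpart2; [|lra].
  assert (Hrhs : i * p - k * (i * (1 - / x)) = (i * p - k) + k * (i * / x - (i - 1)))
    by ring.
  rewrite Hrhs. nra.
Qed.

(* Telescoping identity sum_{i=1}^k (ln i + (i-1)(ln i - ln (i-1))) = k ln k,
   since each summand is i ln i - (i-1) ln (i-1). *)
Lemma sum_ln_telescope (k : nat) :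
  sumR (fun i => ln (INR i) + (INR i - 1) * (ln (INR i) - ln (INR i - 1))) 1 k
  = INR k * ln (INR k).
Proof.
  rewrite (sumR_ext _ (fun i => INR i * ln (INR i) - INR (pred i) * ln (INR (pred i)))).
  - rewrite sumR_telescope. change (INR 0) with 0. ring.
  - intros [|i] Hi; [lia|]. simpl pred.
    replace (INR (S i) - 1) with (INR i) by (rewrite S_INR; ring).
    rewrite S_INR. ring.
Qed.

(* The logarithmic lower bounds of [term_bound] sum to zero. *)
Lemma log_terms_cancel (k : nat) (x : nat -> R) :
  (forall i, (1 <= i <= k)%nat -> 1 <= x i) ->
  sumR (fun i => ln (INR i) - ln (INR k) + ln (prodR x (S i) (k - i))
      + (INR i - 1) * (ln (INR i) - ln (INR i - 1) - ln (x i))) 1 k = 0.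
Proof.
  intros Hx.
  rewrite (sumR_ext _ (fun i =>
       (ln (INR i) + (INR i - 1) * (ln (INR i) - ln (INR i - 1))) + - ln (INR k)
       + sumR (fun j => ln (x j)) (S i) (k - i) - (INR i - 1) * ln (x i))).
  - rewrite sumR_sub, sumR_add, sumR_add, sumR_const, sum_ln_telescope, sumR_exchange. ring.
  - intros i Hi. rewrite ln_prodR by (intros; apply Hx; lia). ring.
Qed.

Lemma num_den_bound (k : nat) (x : nat -> R) : (1 <= k)%nat ->
  (forall i, (1 <= i <= k)%nat -> 1 <= x i) ->
  INR k * numF k x <= denF k x.
Proof.
  intros hk Hx.
  assert (Hk : 0 < INR k) by (apply lt_0_INR; lia).
  assert (Hlow : INR k * 0 <=
      sumR (fun i => INR i * prodR x (S i) (k - i) - INR k * (INR i * (1 - / x i))) 1 k).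
  { rewrite <- (log_terms_cancel k x Hx), <- sumR_scal.
    apply sumR_le; intros i Hi.
    assert (Hp : 1 <= prodR x (S i) (k - i)) by (apply prodR_ge1; intros; apply Hx; lia).
    assert (Hxi : 1 <= x i) by (apply Hx; lia).
    apply term_bound; try lra. apply (le_INR 1); lia. }
  unfold denF, numF. rewrite sumR_sub, sumR_scal in Hlow. lra.
Qed.

(* The denominator is at least its last summand k * 1 >= 1. *)
Lemma den_ge1 (k : nat) (x : nat -> R) : (1 <= k)%nat ->
  (forall i, (1 <= i <= k)%nat -> 1 <= x i) -> 1 <= denF k x.
Proof.
  intros hk Hx. unfold denF. destruct k as [|k]; [lia|].
  rewrite sumR_last. replace (1 + k)%nat with (S k) by lia.
  rewrite Nat.sub_diag. simpl (prodR x _ 0).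
  assert (Hrest : 0 <= sumR (fun i => INR i * prodR x (S i) (S k - i)) 1 k).
  { replace 0 with (sumR (fun _ => 0) 1 k) by (rewrite sumR_const; ring).
    apply sumR_le; intros i Hi.
    assert (Hp : 1 <= prodR x (S i) (S k - i)) by (apply prodR_ge1; intros; apply Hx; lia).
    pose proof (pos_INR i). nra. }
  assert (Hk : 1 <= INR (S k)) by (apply (le_INR 1); lia).
  lra.
Qed.

Lemma F_le_inv (k : nat) (x : nat -> R) : (1 <= k)%nat ->
  (forall i, (1 <= i <= k)%nat -> 1 <= x i) -> F k x <= 1 / INR k.
Proof.
  intros hk Hx.
  assert (Hk : 0 < INR k) by (apply lt_0_INR; lia).
  pose proof (num_den_bound k x hk Hx) as Hbound.
  pose proof (den_ge1 k x hk Hx) as Hden.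
  assert (Hinv : 0 <= / (INR k * denF k x))
    by (left; apply Rinv_0_lt_compat; nra).
  unfold F.
  replace (numF k x / denF k x) with (INR k * numF k x * / (INR k * denF k x))
    by (field; lra).
  replace (1 / INR k) with (denF k x * / (INR k * denF k x)) by (field; lra).
  apply Rmult_le_compat_r; assumption.
Qed.

Definition extremal_point (M : R) (i : nat) : R :=
  match i with 0%nat => 1 | 1%nat => M | _ => INR i / (INR i - 1) end.

Lemma extremal_point_tail (M : R) (i : nat) : (2 <= i)%nat ->
  extremal_point M i = INR i / (INR i - 1) /\ 1 <= extremal_point M i.
Proof.
  intros Hi. destruct i as [|[|i]]; [lia|lia|].
  assert (Hpos : 0 < INR (S (S i)) - 1)
    by (rewrite !S_INR; pose proof (pos_INR i); lra).
  split; [reflexivity|]. unfold extremal_point.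
  apply Rmult_le_reg_r with (r := INR (S (S i)) - 1); [exact Hpos|].
  unfold Rdiv. rewrite Rmult_assoc, Rinv_l by lra. lra.
Qed.

Lemma prodR_extremal (M : R) (m l : nat) : (1 <= m)%nat ->
  prodR (extremal_point M) (S m) l = INR (m + l) / INR m.
Proof.
  revert m; induction l as [|l IH]; intros m Hm.
  - simpl. rewrite Nat.add_0_r. field. apply not_0_INR; lia.
  - cbn [prodR]. rewrite IH by lia.
    destruct (extremal_point_tail M (S m) ltac:(lia)) as [-> _].
    replace (S m + l)%nat with (m + S l)%nat by lia.
    assert (Hm0 : 0 < INR m) by (apply lt_0_INR; lia).
    replace (INR (S m) - 1) with (INR m) by (rewrite S_INR; ring).
    field. split; [lra|]. apply not_0_INR; lia.
Qed.

Lemma num_extremal (k : nat) (M : R) : (1 <= k)%nat ->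
  numF k (extremal_point M) = INR k - / M.
Proof.
  intros hk. unfold numF. destruct k as [|k]; [lia|]. cbn [sumR].
  rewrite (sumR_ext _ (fun _ => 1)).
  - rewrite sumR_const. change (INR 1) with 1. change (extremal_point M 1) with M.
    rewrite S_INR. ring.
  - intros i Hi. destruct (extremal_point_tail M i ltac:(lia)) as [-> _].
    assert (Hpos : 1 < INR i) by (apply (lt_INR 1); lia).
    field. lra.
Qed.

Lemma den_extremal (k : nat) (M : R) : (1 <= k)%nat ->
  denF k (extremal_point M) = INR k * INR k.
Proof.
  intros hk. unfold denF. rewrite (sumR_ext _ (fun _ => INR k)).
  - rewrite sumR_const. ring.
  - intros i Hi. rewrite prodR_extremal by lia.
    replace (i + (k - i))%nat with k by lia.
    field. apply not_0_INR; lia.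
Qed.

Lemma Fvalues_extremal (k : nat) (M : R) : (1 <= k)%nat -> 1 <= M ->
  Fvalues k ((INR k - / M) / (INR k * INR k)).
Proof.
  intros hk HM. exists (extremal_point M). split.
  - intros [|[|i]] Hi; [lia|exact HM|].
    exact (proj2 (extremal_point_tail M (S (S i)) ltac:(lia))).
  - unfold F. rewrite num_extremal, den_extremal by exact hk. reflexivity.
Qed.

Lemma exists_inv_lt (e : R) : 0 < e -> exists M, 1 <= M /\ / M < e.
Proof.
  intros He. assert (Hinv : 0 < / e) by (apply Rinv_0_lt_compat; exact He).
  exists (1 + / e). split; [lra|].
  apply Rmult_lt_reg_l with (r := 1 + / e); [lra|].
  rewrite Rinv_r, Rmult_plus_distr_r, Rinv_l by lra. lra.
Qed.

Theorem theorem3 (k : nat) (hk : (1 <= k)%nat) :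
  is_lub (Fvalues k) (1 / INR k).
Proof.
  assert (Hk : 0 < INR k) by (apply lt_0_INR; lia).
  split.
  - intros v [x [Hx ->]]. exact (F_le_inv k x hk Hx).
  - intros b Hb. destruct (Rle_dec (1 / INR k) b) as [Hle|Hlt]; [exact Hle|exfalso].
    (* if b < 1/k, the value (k - 1/M)/k^2 at an extremal point exceeds b
       as soon as 1/M < k - k^2 b *)
    assert (Hgap : 0 < INR k - INR k * INR k * b).
    { replace (INR k - INR k * INR k * b)
        with (INR k * INR k * (1 / INR k - b)) by (field; lra).
      apply Rmult_lt_0_compat; nra. }
    destruct (exists_inv_lt _ Hgap) as [M [HM HMgap]].
    pose proof (Hb _ (Fvalues_extremal k M hk HM)) as Hval.
    assert (Hk2 : 0 < INR k * INR k) by nra.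
    apply (Rmult_le_compat_l (INR k * INR k)) in Hval; [|lra].
    replace (INR k * INR k * ((INR k - / M) / (INR k * INR k))) with (INR k - / M)
      in Hval by (field; lra).
    lra.
Qed.
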